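(* There is no real polynomial $p$ such that the restriction $p|_{[0,1]}$ satisfies $\Omega_{p|_{[0,1]}}=\{0,2,4\}$, whereas there exists a continuous function $f:[0,1]\to\mathbb{R}$ with $\Omega_f=\{0,2,4\}$.
   Context: $\mathbb{N}=\{0,1,2,\dots\}$. For $f:[0,1]\to\mathbb{R}$, $\Omega_f=\{n\in\mathbb{N}\cup\{\infty\} : \exists x\in\mathbb{R}\text{ with } |f^{-1}(x)|=n\}$, where $|f^{-1}(x)|$ is the cardinality of $\{t\in[0,1]: f(t)=x\}$ and $\infty$ stands for an infinite cardinality. *)

From Stdlib Require Import Reals List.
Open Scope R_scope.

(* Extended cardinal: Some n = finite cardinality n, None = infinite. *)
Definition ecard := option nat.

Definition level_card_fin (f : R -> R) (x : R) (n : nat) : Prop :=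
  exists l : list R,
    NoDup l /\ length l = n /\
    (forall t, In t l <-> (0 <= t <= 1 /\ f t = x)).

Definition level_card_inf (f : R -> R) (x : R) : Prop :=
  forall n : nat, exists l : list R,
    NoDup l /\ length l = n /\
    (forall t, In t l -> 0 <= t <= 1 /\ f t = x).

Definition Omega (f : R -> R) (k : ecard) : Prop :=
  match k with
  | Some n => exists x : R, level_card_fin f x n
  | None => exists x : R, level_card_inf f x
  end.

Definition Omega_is_024 (f : R -> R) : Prop :=
  forall k : ecard, Omega f k <-> (k = Some 0%nat \/ k = Some 2%nat \/ k = Some 4%nat).

(* Real polynomial with coefficient list [a0; a1; ...]: a0 + a1 t + ... *)
Fixpoint poly_eval (p : list R) (t : R) : R :=
  match p with
  | nil => 0
  | a :: q => a + t * poly_eval q t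
  end.

Definition continuous_on_01 (f : R -> R) : Prop :=
  forall x, 0 <= x <= 1 ->
    forall eps, 0 < eps -> exists delta, 0 < delta /\
      forall y, 0 <= y <= 1 -> Rabs (y - x) < delta -> Rabs (f y - f x) < eps.

From Stdlib Require Import Reals List Lra Lia Classical ZArith FinFun.
Open Scope R_scope.

(* A polynomial is differentiated to a constant in finitely many steps
   ([deriv_tower]).  By induction on that number, with the mean value theorem, a polynomial is
   on [0,1] either constant, giving an infinite level set, or piecewise strictly monotone
   ([mono_partition]).  For a continuous piecewise strictly monotone function, the size of each
   level set is read off the breakpoint values ([level_count]), and a parity count shows that
   some level set has an odd number of points.

   The [zigzag] on [0,1/2] is self-similar, zigzag u = zigzag (2u) / 2
   for u <= 1/4, hence oscillates infinitely often near 0; its level sets have 3 points for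
   values in (0,1/4) and 1 or 2 points otherwise.  The [witness] glues a three-piece affine
   function on [0,1/2) to the mirrored zigzag on [1/2,1]: it is 3-Lipschitz, and the level-set
   sizes of the two parts add up to 0, 2 or 4 for every value. *)

Ltac solve_abs := unfold Rabs in *; repeat destruct Rcase_abs; lra.
Ltac solve_minmax := unfold Rmin, Rmax in *; repeat destruct Rle_dec; lra.

(** * Polynomials are piecewise strictly monotone *)

Fixpoint deriv_tower (n : nat) (f : R -> R) : Prop :=
  match n with
  | O => exists c, forall x, f x = c
  | S m => exists g, deriv_tower m g /\ forall x, derivable_pt_lim f x (g x)
  end.

Lemma deriv_tower_const : forall n c, deriv_tower n (fun _ => c).
Proof.
  induction n as [|n IH]; intros c; simpl.
  - exists c; auto.
  - exists (fun _ => 0); split; auto. intros x; apply derivable_pt_lim_const.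
Qed.

Lemma deriv_tower_plus : forall n f g,
  deriv_tower n f -> deriv_tower n g -> deriv_tower n (fun x => f x + g x).
Proof.
  induction n as [|n IH]; intros f g Hf Hg; simpl in *.
  - destruct Hf as [c1 H1], Hg as [c2 H2]. exists (c1 + c2); intros; rewrite H1, H2; auto.
  - destruct Hf as [f' [Hf' Df]], Hg as [g' [Hg' Dg]].
    exists (fun x => f' x + g' x); split; auto.
    intros x. apply (derivable_pt_lim_plus f g x); auto.
Qed.

Lemma derivable_pt_lim_mul_id : forall g x l, derivable_pt_lim g x l ->
  derivable_pt_lim (fun t => t * g t) x (g x + x * l).
Proof.
  intros g x l H. replace (g x + x * l) with (1 * g x + x * l) by ring.
  apply (derivable_pt_lim_mult id g); auto. apply derivable_pt_lim_id.
Qed.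

Lemma deriv_tower_mul_id : forall n g, deriv_tower n g -> deriv_tower (S n) (fun t => t * g t).
Proof.
  induction n as [|n IH]; intros g Hg.
  - destruct Hg as [c Hc]. exists (fun x => g x + x * 0). split.
    + exists c; intros x; rewrite Hc; ring.
    + intros x. apply derivable_pt_lim_mul_id.
      apply (derivable_pt_lim_ext (fun _ => c)); [intros; auto|apply derivable_pt_lim_const].
  - destruct Hg as [h [Hh Dg]]. exists (fun x => g x + x * h x). split.
    + apply deriv_tower_plus; [exists h; auto|auto].
    + intros x. apply derivable_pt_lim_mul_id; auto.
Qed.

Lemma poly_eval_tower : forall p, deriv_tower (length p) (poly_eval p).
Proof.
  induction p as [|a q IH]; simpl.
  - exists 0; auto.
  - apply (deriv_tower_plus (S (length q)) (fun _ => a) (fun t => t * poly_eval q t)).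
    + apply deriv_tower_const.
    + apply deriv_tower_mul_id; auto.
Qed.

Lemma deriv_tower_continuous : forall n f, deriv_tower n f -> continuity f.
Proof.
  intros [|n] f H; simpl in H.
  - destruct H as [c Hc]. apply continuity_const. intros x y; rewrite !Hc; auto.
  - destruct H as [g [_ D]]. intros x. apply derivable_continuous_pt. exists (g x); apply D.
Qed.

Definition strict_mono_on (f : R -> R) (a b : R) : Prop :=
  (forall x y, a <= x -> x < y -> y <= b -> f x < f y) \/
  (forall x y, a <= x -> x < y -> y <= b -> f y < f x).

Lemma strict_mono_inj : forall f a b s t, strict_mono_on f a b ->
  a <= s <= b -> a <= t <= b -> f s = f t -> s = t.
Proof.
  intros f a b s t [H|H] Hs Ht E; destruct (Rtotal_order s t) as [L|[L|L]]; auto;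
  try (specialize (H s t); lra); try (specialize (H t s); lra).
Qed.

Lemma strict_mono_between : forall f a b t, strict_mono_on f a b -> a < t < b ->
  Rmin (f a) (f b) < f t < Rmax (f a) (f b).
Proof.
  intros f a b t [H|H] Ht; assert (H1 := H a t); assert (H2 := H t b); split; solve_minmax.
Qed.

Lemma IVT_interior : forall f a b y, continuity f -> a < b ->
  Rmin (f a) (f b) < y < Rmax (f a) (f b) -> exists t, a < t < b /\ f t = y.
Proof.
  intros f a b y Hc Hab Hy.
  assert (Hcy : continuity (fun _ => y)) by (apply continuity_const; intros ? ?; auto).
  destruct (Rle_dec (f a) (f b)).
  - destruct (IVT (fun x => f x - y) a b) as [t [Ht E]];
      [apply continuity_minus; auto|auto|solve_minmax|solve_minmax|].
    exists t. assert (t <> a) by (intros ->; solve_minmax).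
    assert (t <> b) by (intros ->; solve_minmax). split; lra.
  - destruct (IVT (fun x => y - f x) a b) as [t [Ht E]];
      [apply continuity_minus; auto|auto|solve_minmax|solve_minmax|].
    exists t. assert (t <> a) by (intros ->; solve_minmax).
    assert (t <> b) by (intros ->; solve_minmax). split; lra.
Qed.

Lemma constant_sign : forall g a b, continuity g ->
  (forall t, a < t < b -> g t <> 0) ->
  (forall t, a < t < b -> 0 < g t) \/ (forall t, a < t < b -> g t < 0).
Proof.
  intros g a b Hc Hnz.
  destruct (classic (exists t, a < t < b /\ 0 < g t)) as [[t0 [Ht0 Hp]]|Hn].
  - left. intros t Ht. destruct (Rtotal_order (g t) 0) as [Hneg|[Hz|Hpos]];
      [exfalso|exfalso; apply (Hnz t Ht Hz)|auto].
    destruct (Rtotal_order t t0) as [Hlt|[->|Hgt]]; [|lra|].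
    + destruct (IVT_interior g t t0 0) as [z [Hz E]]; auto; [solve_minmax|].
      apply (Hnz z); auto; lra.
    + destruct (IVT_interior g t0 t 0) as [z [Hz E]]; auto; [solve_minmax|].
      apply (Hnz z); auto; lra.
  - right. intros t Ht. destruct (Rtotal_order (g t) 0) as [Hneg|[Hz|Hpos]]; auto.
    + exfalso; apply (Hnz t Ht Hz).
    + exfalso; apply Hn; exists t; auto.
Qed.

Lemma nonzero_deriv_strict_mono : forall f g a b,
  (forall x, derivable_pt_lim f x (g x)) -> continuity g ->
  (forall t, a < t < b -> g t <> 0) -> strict_mono_on f a b.
Proof.
  intros f g a b D Cg Hnz.
  assert (Hmvt : forall x y, x < y -> exists c, f y - f x = g c * (y - x) /\ x < c < y)
    by (intros x y Hxy; apply MVT_cor2; auto).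
  destruct (constant_sign g a b Cg Hnz) as [Hpos|Hneg]; [left|right];
    intros x y Hx Hxy Hy; destruct (Hmvt x y Hxy) as [c [E Hc]];
    [assert (0 < g c) by (apply Hpos; lra)|assert (g c < 0) by (apply Hneg; lra)]; nra.
Qed.

Lemma zero_deriv_constant : forall f g a b,
  (forall x, derivable_pt_lim f x (g x)) -> (forall t, a <= t <= b -> g t = 0) ->
  forall x, a <= x <= b -> f x = f a.
Proof.
  intros f g a b D H0 x Hx. destruct (Req_dec x a) as [->|Hne]; auto.
  destruct (MVT_cor2 f g a x) as [c [E Hc]]; [lra|auto|].
  rewrite H0 in E by lra. lra.
Qed.

(* [mono_partition f a b l]: [a,b] splits into finitely many pieces on each of which f is
   strictly monotone; l lists the values of f at the successive breakpoints. *)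
Inductive mono_partition (f : R -> R) : R -> R -> list R -> Prop :=
| mono_piece : forall a b, a < b -> strict_mono_on f a b ->
    mono_partition f a b (f a :: f b :: nil)
| mono_cons : forall a b c l, a < b -> strict_mono_on f a b -> mono_partition f b c l ->
    mono_partition f a c (f a :: l).

Lemma mono_partition_concat : forall f a b l1, mono_partition f a b l1 ->
  forall c l2, mono_partition f b c l2 -> exists l, mono_partition f a c l.
Proof.
  intros f a b l1 H; induction H; intros c' l2 H2.
  - exists (f a :: l2). apply mono_cons with b; auto.
  - destruct (IHmono_partition c' l2 H2) as [l' Hl'].
    exists (f a :: l'). apply mono_cons with b; auto.
Qed.

(* If f' is continuous and strictly monotone on [a,b], it vanishes at most once there, so
   f is strictly monotone on at most two pieces. *)
Lemma partition_of_mono_deriv : forall f g a b,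
  (forall x, derivable_pt_lim f x (g x)) -> continuity g -> a < b -> strict_mono_on g a b ->
  exists l, mono_partition f a b l.
Proof.
  intros f g a b D Cg Hab Hg.
  destruct (classic (exists z, a < z < b /\ g z = 0)) as [[z [Hz Hgz]]|Hn].
  - assert (Hnz : forall t, a <= t <= b -> t <> z -> g t <> 0).
    { intros t Ht Htz E. apply Htz. apply (strict_mono_inj g a b); auto; lra. }
    exists (f a :: f z :: f b :: nil). apply mono_cons with z; [lra| |apply mono_piece; [lra|]];
      apply (nonzero_deriv_strict_mono f g); auto; intros t Ht; apply Hnz; lra.
  - exists (f a :: f b :: nil). apply mono_piece; auto.
    apply (nonzero_deriv_strict_mono f g); auto. intros t Ht E. apply Hn; eauto.
Qed.

Lemma deriv_tower_partition : forall n f, deriv_tower n f -> forall a b, a < b ->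
  (forall x, a <= x <= b -> f x = f a) \/ exists l, mono_partition f a b l.
Proof.
  induction n as [|n IH]; intros f Hf a b Hab.
  - left. destruct Hf as [c Hc]. intros; rewrite !Hc; auto.
  - destruct Hf as [g [Hg D]]. assert (Cg := deriv_tower_continuous n g Hg).
    destruct (IH g Hg a b Hab) as [Hc | [l Hl]].
    + destruct (Req_dec (g a) 0) as [Hz|Hnz].
      * left. apply (zero_deriv_constant f g); auto. intros t Ht. rewrite Hc; auto.
      * right. exists (f a :: f b :: nil). apply mono_piece; auto.
        apply (nonzero_deriv_strict_mono f g); auto. intros t Ht. rewrite Hc; auto; lra.
    + right. clear Hab. induction Hl as [a b Hab Hm|a b c l Hab Hm Hl [l2 Hl2]].
      * apply (partition_of_mono_deriv f g); auto.
      * destruct (partition_of_mono_deriv f g a b) as [l1 Hl1]; auto.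
        apply (mono_partition_concat f a b l1 Hl1 c l2 Hl2).
Qed.

(** * Level sets of piecewise monotone functions *)

Definition level_list (f : R -> R) (D : R -> Prop) (y : R) (L : list R) : Prop :=
  NoDup L /\ forall t, In t L <-> (D t /\ f t = y).

Lemma level_list_app : forall f D1 D2 y L1 L2,
  level_list f D1 y L1 -> level_list f D2 y L2 -> (forall t, D1 t -> D2 t -> False) ->
  level_list f (fun t => D1 t \/ D2 t) y (L1 ++ L2).
Proof.
  intros f D1 D2 y L1 L2 [N1 M1] [N2 M2] Hdisj. split.
  - apply NoDup_app; auto. intros t H1 H2. apply M1 in H1. apply M2 in H2. firstorder.
  - intros t. rewrite in_app_iff, M1, M2. tauto.
Qed.

Lemma level_list_ext : forall f g D D' y L,
  (forall t, D' t <-> D t) -> (forall t, D t -> g t = f t) ->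
  level_list f D y L -> level_list g D' y L.
Proof.
  intros f g D D' y L HD Hfg [N M]. split; auto.
  intros t. rewrite M, HD. split; intros [Ht E]; split; auto.
  - rewrite Hfg; auto.
  - rewrite <- Hfg; auto.
Qed.

Lemma level_list_length : forall f D y L L',
  level_list f D y L -> level_list f D y L' -> length L = length L'.
Proof.
  intros f D y L L' [N M] [N' M'].
  assert (length L <= length L')%nat
    by (apply NoDup_incl_length; auto; intros t Ht; apply M', M, Ht).
  assert (length L' <= length L)%nat
    by (apply NoDup_incl_length; auto; intros t Ht; apply M, M', Ht).
  lia.
Qed.

Lemma level_list_nil : forall f D y, (forall t, D t -> f t <> y) -> level_list f D y nil.
Proof.
  intros f D y H. split; [constructor|].
  intros t; split; [intros []|intros [Ht E]; exact (H t Ht E)].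
Qed.

Lemma level_list_single : forall f D y t0,
  (forall t, D t /\ f t = y <-> t = t0) -> level_list f D y (t0 :: nil).
Proof.
  intros f D y t0 H. split; [repeat constructor; auto|].
  intros t. rewrite H. simpl. split; [intros [E|[]]|intros E; left]; auto.
Qed.

Lemma level_list_map : forall f g D D' y y' (phi psi : R -> R) L,
  (forall u, psi (phi u) = u) -> (forall t, phi (psi t) = t) ->
  (forall t, D' t /\ g t = y' <-> D (psi t) /\ f (psi t) = y) ->
  level_list f D y L -> level_list g D' y' (map phi L).
Proof.
  intros f g D D' y y' phi psi L Hpsi Hphi HD [N M]. split.
  - apply Injective_map_NoDup; auto. intros u v E. rewrite <- (Hpsi u), <- (Hpsi v), E; auto.
  - intros t. rewrite HD, <- M, in_map_iff. split.
    + intros [u [<- Hu]]. rewrite Hpsi; auto.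
    + intros Ht. exists (psi t); auto.
Qed.

Definition hit (w y : R) : nat := if Req_EM_T w y then 1%nat else 0%nat.
Definition crosses (w w' y : R) : nat :=
  if Rlt_dec (Rmin w w') y then if Rlt_dec y (Rmax w w') then 1%nat else 0%nat else 0%nat.

(* Number of solutions of f t = y predicted by the breakpoint values l of a monotone partition. *)
Fixpoint level_count (l : list R) (y : R) : nat :=
  match l with
  | nil => 0%nat
  | w :: r => (hit w y + match r with nil => 0%nat | w' :: _ => crosses w w' y end
               + level_count r y)%nat
  end.

Lemma strict_mono_level : forall f a b, continuity f -> a < b -> strict_mono_on f a b ->
  forall y, exists L, length L = (hit (f a) y + crosses (f a) (f b) y)%nat /\
                      level_list f (fun t => a <= t < b) y L.
Proof.
  intros f a b Hc Hab Hs y.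
  assert (Hunique : forall t0, a <= t0 < b -> f t0 = y ->
            forall t, a <= t < b /\ f t = y <-> t = t0).
  { intros t0 Ht0 E0 t. split; [intros [Ht E]|intros ->; auto].
    apply (strict_mono_inj f a b); [auto|lra|lra|congruence]. }
  assert (Hnone : ~ (Rmin (f a) (f b) < y < Rmax (f a) (f b)) -> f a <> y ->
            level_list f (fun t => a <= t < b) y nil).
  { intros Hy Ha. apply level_list_nil. intros t Ht E.
    destruct (Req_dec t a) as [->|Hta]; [contradiction|].
    apply Hy. rewrite <- E. apply strict_mono_between; auto; lra. }
  unfold hit, crosses. destruct (Req_EM_T (f a) y) as [E|E].
  - exists (a :: nil). split.
    + repeat destruct Rlt_dec; auto. exfalso; solve_minmax.
    + apply level_list_single, Hunique; auto; lra.
  - destruct (Rlt_dec (Rmin (f a) (f b)) y) as [L1|L1];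
      [destruct (Rlt_dec y (Rmax (f a) (f b))) as [L2|L2]|].
    + destruct (IVT_interior f a b y) as [t0 [Ht0 Hf0]]; auto.
      exists (t0 :: nil). split; auto. apply level_list_single, Hunique; auto; lra.
    + exists nil; split; auto. apply Hnone; auto. lra.
    + exists nil; split; auto. apply Hnone; auto. lra.
Qed.

Lemma mono_partition_head : forall f a b l, mono_partition f a b l -> exists r, l = f a :: r.
Proof. intros f a b l H; destruct H; eauto. Qed.

Lemma mono_partition_lt : forall f a b l, mono_partition f a b l -> a < b.
Proof. intros f a b l H; induction H; lra. Qed.

Lemma partition_level : forall f a b l, mono_partition f a b l -> continuity f -> forall y,
  exists L, length L = level_count l y /\ level_list f (fun t => a <= t <= b) y L.
Proof.
  intros f a b l H Hc; induction H as [a b Hab Hm|a b c l Hab Hm Hl IH]; intros y;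
    destruct (strict_mono_level f a b Hc Hab Hm y) as [L1 [E1 H1]].
  - assert (Hb : exists Lb, length Lb = hit (f b) y /\ level_list f (fun t => t = b) y Lb).
    { unfold hit. destruct (Req_EM_T (f b) y) as [E|E]; [exists (b :: nil)|exists nil];
        split; auto; [apply level_list_single|apply level_list_nil]; intros t.
      - split; [tauto|intros ->; auto].
      - intros ->; auto. }
    destruct Hb as [Lb [Eb Hb]]. exists (L1 ++ Lb). split.
    + rewrite length_app, E1, Eb. simpl. lia.
    + apply (level_list_ext f f (fun t => a <= t < b \/ t = b)); auto.
      * intros t; lra.
      * apply level_list_app; auto. intros t; lra.
  - destruct (IH y) as [L2 [E2 H2]]. destruct (mono_partition_head f b c l Hl) as [r Hr].
    assert (Hbc := mono_partition_lt f b c l Hl).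
    exists (L1 ++ L2). split.
    + rewrite length_app, E1, E2, Hr. simpl. lia.
    + apply (level_list_ext f f (fun t => a <= t < b \/ b <= t <= c)); auto.
      * intros t; lra.
      * apply level_list_app; auto. intros t; lra.
Qed.

(** * Parity: a piecewise monotone function has a level set of odd size *)

(* Writing N(y) for [level_count l y] and v_0, ..., v_k for the breakpoint values, one has
   N(y) + [v_0 <= y] + [v_k <= y] = #{i | v_i = y} + #{pieces whose lower end value is y}
   modulo 2.  If v_0 <> v_k, a generic y between them has odd N(y); if v_0 = v_k and all N(y)
   were even, the multiset of the v_i and of the lower end values (2k+1 elements) would have
   only even multiplicities. *)

Definition below (w y : R) : nat := if Rle_dec w y then 1%nat else 0%nat.

Fixpoint piece_minima (l : list R) : list R :=
  match l with
  | w :: ((w' :: _) as r) => Rmin w w' :: piece_minima r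
  | _ => nil
  end.

Fixpoint no_flat_piece (l : list R) : Prop :=
  match l with
  | w :: ((w' :: _) as r) => w <> w' /\ no_flat_piece r
  | _ => True
  end.

Lemma piece_parity : forall w w' y, w <> w' ->
  Nat.Even (crosses w w' y + below w y + below w' y + hit (Rmin w w') y).
Proof.
  intros w w' y H. unfold crosses, below, hit.
  repeat (destruct Rlt_dec || destruct Req_EM_T || destruct Rle_dec);
  first [exists 0%nat; reflexivity | exists 1%nat; reflexivity | exfalso; solve_minmax].
Qed.

Lemma count_occ_cons_hit : forall x (L : list R) y,
  count_occ Req_EM_T (x :: L) y = (hit x y + count_occ Req_EM_T L y)%nat.
Proof. intros x L y. unfold hit. simpl. destruct Req_EM_T; lia. Qed.

Lemma level_count_parity : forall l w y, no_flat_piece (w :: l) ->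
  Nat.Even (level_count (w :: l) y + below w y + below (last (w :: l) 0) y
            + count_occ Req_EM_T (w :: l) y + count_occ Req_EM_T (piece_minima (w :: l)) y).
Proof.
  induction l as [|w' r IH]; intros w y Hnf.
  - exists (hit w y + below w y)%nat. simpl. unfold hit. destruct Req_EM_T; simpl; lia.
  - destruct Hnf as [Hne Hnf].
    destruct (IH w' y Hnf) as [k1 H1], (piece_parity w w' y Hne) as [k2 H2].
    change (last (w :: w' :: r) 0) with (last (w' :: r) 0) in *.
    change (piece_minima (w :: w' :: r)) with (Rmin w w' :: piece_minima (w' :: r)).
    change (level_count (w :: w' :: r) y)
      with (hit w y + crosses w w' y + level_count (w' :: r) y)%nat.
    rewrite !count_occ_cons_hit in *.
    assert (below w' y <= 1)%nat by (unfold below; destruct Rle_dec; lia).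
    exists (k1 + k2 + hit w y - below w' y)%nat. lia.
Qed.

Lemma count_occ_remove_length : forall (D : list R) x,
  length D = (count_occ Req_EM_T D x + length (remove Req_EM_T x D))%nat.
Proof.
  induction D as [|a D IH]; intros x; simpl; auto.
  destruct (Req_EM_T a x), (Req_EM_T x a); subst; simpl; try congruence; rewrite (IH x); lia.
Qed.

Lemma count_occ_remove_other : forall (D : list R) x y, x <> y ->
  count_occ Req_EM_T (remove Req_EM_T x D) y = count_occ Req_EM_T D y.
Proof.
  induction D as [|a D IH]; intros x y H; simpl; auto.
  destruct (Req_EM_T x a), (Req_EM_T a y); subst; simpl; try congruence;
  try (destruct Req_EM_T; try congruence); rewrite IH; auto.
Qed.

Lemma even_multiplicities_even_length : forall n (D : list R), (length D <= n)%nat ->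
  (forall y, Nat.Even (count_occ Req_EM_T D y)) -> Nat.Even (length D).
Proof.
  induction n as [|n IH]; intros [|x D] Hn H; try (exists 0%nat; reflexivity); [simpl in Hn; lia|].
  rewrite (count_occ_remove_length (x :: D) x) in *.
  assert (Hx : count_occ Req_EM_T (x :: D) x <> 0%nat)
    by (rewrite count_occ_cons_eq; auto; lia).
  assert (Hrest : Nat.Even (length (remove Req_EM_T x (x :: D)))).
  { apply IH; [lia|]. intros y. destruct (Req_EM_T x y) as [<-|Hxy].
    - rewrite (proj1 (count_occ_not_In Req_EM_T _ x)); [exists 0%nat; auto|apply remove_In].
    - rewrite count_occ_remove_other; auto. }
  destruct (H x) as [k1 H1], Hrest as [k2 H2]. exists (k1 + k2)%nat. lia.
Qed.

Lemma exists_avoiding : forall (l : list R) a b, a < b -> exists y, a < y < b /\ ~ In y l.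
Proof.
  induction l as [|x l IH]; intros a b H.
  - exists ((a + b) / 2). split; [lra|auto].
  - destruct (Rle_dec x ((a + b) / 2)).
    + destruct (IH ((a + b) / 2) b) as [y [Hy Hn]]; [lra|].
      exists y; split; [lra|]. intros [E|E]; [lra|auto].
    + destruct (IH a ((a + b) / 2)) as [y [Hy Hn]]; [lra|].
      exists y; split; [lra|]. intros [E|E]; [lra|auto].
Qed.

Lemma piece_minima_length : forall l w, length (piece_minima (w :: l)) = length l.
Proof.
  induction l as [|w' r IH]; intros w; [reflexivity|].
  change (piece_minima (w :: w' :: r)) with (Rmin w w' :: piece_minima (w' :: r)).
  exact (f_equal S (IH w')).
Qed.

Lemma mono_partition_no_flat : forall f a b l, mono_partition f a b l -> no_flat_piece l.
Proof.
  assert (Hne : forall f a b, a < b -> strict_mono_on f a b -> f a <> f b)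
    by (intros f a b Hab [H|H]; specialize (H a b); lra).
  intros f a b l H; induction H as [a b Hab Hm|a b c l Hab Hm Hl IH]; simpl; auto.
  destruct (mono_partition_head f b c l Hl) as [r ->]. split; auto.
Qed.

Lemma mono_partition_last : forall f a b l, mono_partition f a b l -> last l 0 = f b.
Proof.
  intros f a b l H; induction H as [|a b c l Hab Hm Hl IH]; simpl; auto.
  destruct (mono_partition_head f b c l Hl) as [r ->]. auto.
Qed.

Lemma mono_partition_odd_level : forall f a b l, mono_partition f a b l ->
  exists y, ~ Nat.Even (level_count l y).
Proof.
  intros f a b l H.
  assert (Hnf := mono_partition_no_flat f a b l H). assert (Hlast := mono_partition_last f a b l H).
  destruct (mono_partition_head f a b l H) as [r ->].
  assert (Hpar := fun y => level_count_parity r (f a) y Hnf). rewrite Hlast in Hpar.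
  destruct (Req_dec (f a) (f b)) as [E|E].
  - apply NNPP. intros Hall.
    assert (Heven : Nat.Even (length ((f a :: r) ++ piece_minima (f a :: r)))).
    { apply (even_multiplicities_even_length _ _ (le_n _)). intros y.
      assert (Hy : Nat.Even (level_count (f a :: r) y)) by (apply NNPP; eauto).
      destruct Hy as [k1 H1], (Hpar y) as [k2 H2]. rewrite <- E in H2.
      rewrite count_occ_app. exists (k2 - k1 - below (f a) y)%nat. lia. }
    rewrite length_app, piece_minima_length in Heven. destruct Heven as [k Hk]. simpl in Hk. lia.
  - destruct (exists_avoiding ((f a :: r) ++ piece_minima (f a :: r))
                (Rmin (f a) (f b)) (Rmax (f a) (f b))) as [y [Hy Hn]]; [solve_minmax|].
    exists y. intros [k Hk]. destruct (Hpar y) as [k2 H2].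
    rewrite !(proj1 (count_occ_not_In Req_EM_T _ y)) in H2
      by (intros Hi; apply Hn, in_app_iff; auto).
    unfold below in H2. destruct (Rle_dec (f a) y), (Rle_dec (f b) y); try solve_minmax; lia.
Qed.

(** * No polynomial has Omega = {0,2,4} *)

Lemma constant_level_infinite : forall f,
  (forall x, 0 <= x <= 1 -> f x = f 0) -> level_card_inf f (f 0).
Proof.
  intros f Hc n. exists (map (fun k => / INR (S k)) (seq 0 n)). split; [|split].
  - apply Injective_map_NoDup; [|apply seq_NoDup].
    intros i j E. apply Nat.succ_inj, INR_eq.
    rewrite <- (Rinv_inv (INR (S i))), <- (Rinv_inv (INR (S j))), E; auto.
  - rewrite length_map, length_seq; auto.
  - intros t Ht. apply in_map_iff in Ht. destruct Ht as [k [<- _]].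
    assert (1 <= INR (S k)) by (rewrite S_INR; assert (0 <= INR k) by apply pos_INR; lra).
    assert (0 < / INR (S k)) by (apply Rinv_0_lt_compat; lra).
    assert (/ INR (S k) <= 1) by (rewrite <- Rinv_1; apply Rinv_le_contravar; lra).
    split; [lra|apply Hc; lra].
Qed.

(* The restriction of a polynomial to [0,1] has either an infinite or an odd-sized level set. *)
Lemma polynomial_not_024 : ~ exists p : list R, Omega_is_024 (poly_eval p).
Proof.
  intros [p H]. set (f := poly_eval p) in *.
  assert (Cf : continuity f) by (apply (deriv_tower_continuous (length p)), poly_eval_tower).
  destruct (deriv_tower_partition (length p) f (poly_eval_tower p) 0 1 ltac:(lra))
    as [Hc|[l Hl]].
  - assert (Hinf : Omega f None) by (exists (f 0); apply constant_level_infinite; auto).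
    apply H in Hinf. destruct Hinf as [E|[E|E]]; discriminate.
  - destruct (mono_partition_odd_level f 0 1 l Hl) as [y Hodd].
    destruct (partition_level f 0 1 l Hl Cf y) as [L [E [N M]]].
    assert (Hfin : Omega f (Some (level_count l y))) by (exists y, L; auto).
    apply H in Hfin. apply Hodd.
    destruct Hfin as [E'|[E'|E']]; injection E' as ->;
      [exists 0%nat|exists 1%nat|exists 2%nat]; reflexivity.
Qed.

(** * A continuous function with Omega = {0,2,4} *)

(* Solves the level set of a piece on which f is affine, given the candidate solution t0. *)
Ltac affine_piece_level f t0 :=
  repeat match goal with |- context [if ?c then _ else _] => destruct c end;
  first [ exists (t0 :: nil); split; [reflexivity|apply level_list_single];
          intros t; unfold f; split; [intros [Ht E]|intros ->]
        | exists nil; split; [reflexivity|apply level_list_nil];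
          intros t Ht E; unfold f in E ];
  repeat (destruct Rle_dec || destruct Rlt_dec); lra.

Definition lipschitz_on (f : R -> R) (K a b : R) : Prop :=
  forall x y, a <= x -> x <= y -> y <= b -> Rabs (f y - f x) <= K * (y - x).

Lemma lipschitz_glue : forall f K a m b,
  lipschitz_on f K a m -> lipschitz_on f K m b -> lipschitz_on f K a b.
Proof.
  intros f K a m b H1 H2 x y Hx Hxy Hy.
  destruct (Rle_dec y m); [apply H1; lra|]. destruct (Rle_dec m x); [apply H2; lra|].
  specialize (H1 x m Hx ltac:(lra) ltac:(lra)). specialize (H2 m y ltac:(lra) ltac:(lra) Hy).
  solve_abs.
Qed.

Lemma lipschitz_ext : forall f g K a b, (forall t, a <= t <= b -> f t = g t) ->
  lipschitz_on g K a b -> lipschitz_on f K a b.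
Proof. intros f g K a b E H x y Hx Hxy Hy. rewrite !E by lra. apply H; auto. Qed.

Lemma lipschitz_continuous_on_01 : forall f K, 0 < K -> lipschitz_on f K 0 1 -> continuous_on_01 f.
Proof.
  intros f K HK H x Hx eps He. exists (eps / K). split; [apply Rdiv_lt_0_compat; auto|].
  intros y Hy Hd. assert (Hd' : K * Rabs (y - x) < eps).
  { apply (Rmult_lt_compat_l K) in Hd; auto. unfold Rdiv in Hd. field_simplify in Hd; lra. }
  destruct (Rle_dec x y).
  - assert (Hl := H x y ltac:(lra) r ltac:(lra)). solve_abs.
  - assert (Hl := H y x ltac:(lra) ltac:(lra) ltac:(lra)). solve_abs.
Qed.

Lemma Omega_of_counts : forall f (c : R -> nat),
  (forall y, exists L, length L = c y /\ level_list f (fun t => 0 <= t <= 1) y L) ->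
  forall k, Omega f k <-> exists y, k = Some (c y).
Proof.
  intros f c Hc [n|]; simpl; split.
  - intros [y [L' [N' [E' M']]]]. destruct (Hc y) as [L [E HL]]. exists y.
    rewrite <- E', <- E. f_equal. apply (level_list_length f (fun t => 0 <= t <= 1) y); auto.
    split; auto.
  - intros [y E]. injection E as ->. destruct (Hc y) as [L [E [N M]]]. exists y, L. auto.
  - intros [y Hinf]. destruct (Hc y) as [L [E [N M]]], (Hinf (S (length L))) as [L' [N' [E' M']]].
    assert (Hle : (length L' <= length L)%nat)
      by (apply NoDup_incl_length; auto; intros t Ht; apply M, M', Ht).
    lia.
  - intros [y E]; discriminate.
Qed.

(* The self-similar zigzag on [0,1/2]: on (1/4,1/2] it is [zigzag_base] (down from 1/4 to 1/8,
   then up to 1/2), and zigzag u = zigzag (2u) / 2 on (0,1/4].  It has infinitely many monotone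
   pieces accumulating at 0, so the parity argument above does not apply to it. *)
Definition zigzag_base (u : R) : R := if Rle_dec (3/8) u then 3 * u - 1 else 1/2 - u.

Fixpoint zigzag_approx (n : nat) (u : R) : R :=
  match n with
  | O => 0
  | S n' => if Rlt_dec (1/4) u then zigzag_base u else zigzag_approx n' (2 * u) / 2
  end.

(* Enough doublings to bring u > 0 above 1/4. *)
Definition doubling_steps (u : R) : nat := Z.to_nat (up (/ u)).

Definition zigzag (u : R) : R := zigzag_approx (S (doubling_steps u)) u.

Lemma pow2_gt : forall n, INR n < 2 ^ n.
Proof.
  induction n as [|n IH]; [simpl; lra|].
  rewrite S_INR. simpl. assert (1 <= 2 ^ n) by (apply pow_R1_Rle; lra). lra.
Qed.

Lemma doubling_steps_spec : forall u, 0 < u -> 1/4 < 2 ^ (doubling_steps u) * u.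
Proof.
  intros u Hu. unfold doubling_steps. destruct (archimed (/ u)) as [H1 _].
  assert (0 < / u) by (apply Rinv_0_lt_compat; auto).
  assert (Hz : (0 <= up (/ u))%Z) by (apply le_IZR; lra).
  assert (INR (Z.to_nat (up (/ u))) = IZR (up (/ u)))
    by (rewrite INR_IZR_INZ, Z2Nat.id; auto).
  assert (H3 := pow2_gt (Z.to_nat (up (/ u)))).
  assert (/ u * u < 2 ^ Z.to_nat (up (/ u)) * u) by (apply Rmult_lt_compat_r; lra).
  rewrite Rinv_l in *; lra.
Qed.

Lemma zigzag_approx_stable : forall n u, 1/4 < 2 ^ n * u ->
  forall m, (n < m)%nat -> zigzag_approx m u = zigzag_approx (S n) u.
Proof.
  induction n as [|n IH]; intros u Hu [|m] Hm; try lia; simpl in Hu |- *.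
  - destruct Rlt_dec; [auto|lra].
  - destruct Rlt_dec; auto. rewrite (IH (2 * u)); auto; [lra|lia].
Qed.

Lemma zigzag_eq : forall n u, 0 < u -> 1/4 < 2 ^ n * u -> zigzag u = zigzag_approx (S n) u.
Proof.
  intros n u Hu H. unfold zigzag. assert (H2 := doubling_steps_spec u Hu).
  rewrite <- (zigzag_approx_stable _ u H2 (S (max n (doubling_steps u)))) by lia.
  rewrite <- (zigzag_approx_stable n u H (S (max n (doubling_steps u)))) by lia. auto.
Qed.

Lemma zigzag_top : forall u, 1/4 < u -> zigzag u = zigzag_base u.
Proof.
  intros u H. rewrite (zigzag_eq 0 u); simpl; [destruct Rlt_dec|..]; lra || auto.
Qed.

Lemma zigzag_double : forall u, 0 < u -> u <= 1/4 -> zigzag u = zigzag (2 * u) / 2.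
Proof.
  intros u Hu H. assert (H1 := doubling_steps_spec u Hu). unfold zigzag at 1.
  destruct (doubling_steps u) as [|n] eqn:En; [simpl in H1; lra|].
  simpl. destruct Rlt_dec; [lra|]. rewrite (zigzag_eq n (2 * u)); auto; simpl in H1; lra.
Qed.

Lemma zigzag_zero : zigzag 0 = 0.
Proof.
  unfold zigzag. induction (S (doubling_steps 0)) as [|n IH]; simpl; auto.
  destruct Rlt_dec; [lra|]. rewrite Rmult_0_r, IH. lra.
Qed.

Lemma doubling_ind : forall P : R -> Prop,
  (forall y, 1/4 < y -> P y) -> (forall y, 0 < y -> y <= 1/4 -> P (2 * y) -> P y) ->
  forall y, 0 < y -> P y.
Proof.
  intros P Hb Hs y Hy. assert (H := doubling_steps_spec y Hy).
  set (k := doubling_steps y) in H. clearbody k. revert y Hy H.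
  induction k as [|n IH]; intros y Hy H; [apply Hb; simpl in H; lra|].
  destruct (Rlt_dec (1/4) y); [apply Hb; auto|].
  apply Hs; [auto|lra|]. apply IH; [lra|]. simpl in H. lra.
Qed.

Lemma zigzag_bounds : forall u, 0 < u -> u <= 1/2 -> 0 < zigzag u <= u.
Proof.
  apply (doubling_ind (fun u => u <= 1/2 -> 0 < zigzag u <= u)).
  - intros u Hu H. rewrite zigzag_top; auto. unfold zigzag_base; destruct Rle_dec; lra.
  - intros u Hu H IH _. rewrite zigzag_double; auto. specialize (IH ltac:(lra)). lra.
Qed.

Lemma zigzag_half : zigzag (1/2) = 1/2.
Proof. rewrite zigzag_top by lra. unfold zigzag_base; destruct Rle_dec; lra. Qed.

Lemma zigzag_quarter : zigzag (1/4) = 1/4.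
Proof.
  rewrite zigzag_double by lra. replace (2 * (1/4)) with (1/2) by lra. rewrite zigzag_half; lra.
Qed.

Lemma zigzag_lipschitz_top : lipschitz_on zigzag 3 (1/4) (1/2).
Proof.
  apply (lipschitz_ext zigzag zigzag_base).
  - intros t Ht. destruct (Req_dec t (1/4)) as [->|]; [|apply zigzag_top; lra].
    rewrite zigzag_quarter. unfold zigzag_base; destruct Rle_dec; lra.
  - intros x y Hx Hxy Hy. unfold zigzag_base; repeat destruct Rle_dec; solve_abs.
Qed.

Lemma zigzag_lipschitz : lipschitz_on zigzag 3 0 (1/2).
Proof.
  assert (Hpos : forall u, 0 < u -> lipschitz_on zigzag 3 u (1/2)).
  { apply doubling_ind.
    - intros u Hu x y Hx Hxy Hy. apply zigzag_lipschitz_top; lra.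
    - intros u Hu H IH. apply (lipschitz_glue _ _ _ (1/4)); [|apply zigzag_lipschitz_top].
      intros x y Hx Hxy Hy. rewrite (zigzag_double x), (zigzag_double y) by lra.
      specialize (IH (2 * x) (2 * y) ltac:(lra) ltac:(lra) ltac:(lra)). solve_abs. }
  intros x y Hx Hxy Hy. destruct (Req_dec x 0) as [->|Hx0]; [|apply (Hpos x); lra].
  rewrite zigzag_zero. destruct (Req_dec y 0) as [->|Hy0].
  - rewrite zigzag_zero. solve_abs.
  - assert (Hb := zigzag_bounds y ltac:(lra) Hy). solve_abs.
Qed.

(* Number of solutions of zigzag u = y on (1/4,1/2]: on the rising part [3/8,1/2] and on the
   falling part (1/4,3/8). *)
Definition zigzag_top_count (y : R) : nat :=
  ((if Rle_dec (1/8) y then if Rle_dec y (1/2) then 1 else 0 else 0) +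
   (if Rlt_dec (1/8) y then if Rlt_dec y (1/4) then 1 else 0 else 0))%nat.

Lemma zigzag_top_level : forall y, exists L,
  length L = zigzag_top_count y /\ level_list zigzag (fun u => 1/4 < u <= 1/2) y L.
Proof.
  intros y.
  assert (Hup : exists L, length L = (if Rle_dec (1/8) y then if Rle_dec y (1/2) then 1 else 0
                                      else 0)%nat /\
                          level_list zigzag_base (fun u => 3/8 <= u <= 1/2) y L)
    by affine_piece_level zigzag_base ((1 + y) / 3).
  assert (Hdown : exists L, length L = (if Rlt_dec (1/8) y then if Rlt_dec y (1/4) then 1 else 0
                                        else 0)%nat /\
                            level_list zigzag_base (fun u => 1/4 < u < 3/8) y L)
    by affine_piece_level zigzag_base (1/2 - y).
  destruct Hup as [L1 [E1 H1]], Hdown as [L2 [E2 H2]].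
  exists (L1 ++ L2). split; [rewrite length_app, E1, E2; reflexivity|].
  apply (level_list_ext zigzag_base zigzag (fun u => 3/8 <= u <= 1/2 \/ 1/4 < u < 3/8)).
  - intros t; lra.
  - intros t Ht. apply zigzag_top; lra.
  - apply level_list_app; auto. intros t; lra.
Qed.

Definition zigzag_count (y : R) : nat :=
  if Rlt_dec (1/2) y then 0%nat else if Rlt_dec (1/4) y then 1%nat
  else if Req_EM_T y (1/4) then 2%nat else if Rlt_dec 0 y then 3%nat
  else if Req_EM_T y 0 then 1%nat else 0%nat.

(* Self-similarity: the solutions in (0,1/4] are the halves of the solutions of
   zigzag u = 2y in (0,1/2]. *)
Lemma zigzag_level_pos : forall y, 0 < y -> exists L,
  length L = zigzag_count y /\ level_list zigzag (fun u => 0 < u <= 1/2) y L.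
Proof.
  assert (Hsplit : forall y Lb, level_list zigzag (fun u => 0 < u <= 1/4) y Lb -> exists L,
            length L = (zigzag_top_count y + length Lb)%nat /\
            level_list zigzag (fun u => 0 < u <= 1/2) y L).
  { intros y Lb Hb. destruct (zigzag_top_level y) as [Lt [Et Ht]].
    exists (Lt ++ Lb). split; [rewrite length_app, Et; reflexivity|].
    apply (level_list_ext zigzag zigzag (fun u => 1/4 < u <= 1/2 \/ 0 < u <= 1/4)); auto.
    - intros t; lra.
    - apply level_list_app; auto. intros t; lra. }
  apply doubling_ind.
  - intros y Hy. destruct (Hsplit y nil) as [L [E HL]].
    + apply level_list_nil. intros t Ht Et.
      assert (Hb := zigzag_bounds t ltac:(lra) ltac:(lra)). lra.
    + exists L. split; auto. rewrite E. unfold zigzag_top_count, zigzag_count.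
      repeat (destruct Rle_dec || destruct Rlt_dec || destruct Req_EM_T); simpl; lra || lia.
  - intros y Hy Hy4 [L' [E' H']]. destruct (Hsplit y (map (fun w => w / 2) L')) as [L [E HL]].
    + apply (level_list_map zigzag zigzag (fun u => 0 < u <= 1/2) _ (2 * y) y _ (fun t => 2 * t));
        [intros; field|intros; field| |auto].
      intros t. split; intros [Ht Hf].
      * rewrite zigzag_double in Hf by lra. split; lra.
      * rewrite zigzag_double by lra. split; lra.
    + exists L. split; auto. rewrite E, length_map, E'. unfold zigzag_top_count, zigzag_count.
      repeat (destruct Rle_dec || destruct Rlt_dec || destruct Req_EM_T); simpl; lra || lia.
Qed.

Lemma zigzag_level : forall y, exists L,
  length L = zigzag_count y /\ level_list zigzag (fun u => 0 <= u <= 1/2) y L.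
Proof.
  intros y. destruct (Rtotal_order 0 y) as [Hy|[<-|Hy]].
  - destruct (zigzag_level_pos y Hy) as [L [E HL]]. exists (nil ++ L). split; [auto|].
    apply (level_list_ext zigzag zigzag (fun u => u = 0 \/ 0 < u <= 1/2)); auto.
    + intros t; lra.
    + apply level_list_app; auto; [|intros t; lra].
      apply level_list_nil. intros t -> E0. rewrite zigzag_zero in E0. lra.
  - exists (0 :: nil). split.
    + unfold zigzag_count; repeat (destruct Rlt_dec || destruct Req_EM_T); lra || auto.
    + apply level_list_single. intros t.
      split; [intros [Ht E]|intros ->; split; [lra|apply zigzag_zero]].
      destruct (Req_dec t 0) as [|Ht0]; auto.
      assert (Hb := zigzag_bounds t ltac:(lra) ltac:(lra)). lra.
  - exists nil. split.
    + unfold zigzag_count; repeat (destruct Rlt_dec || destruct Req_EM_T); lra || auto.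
    + apply level_list_nil. intros t Ht E. destruct (Req_dec t 0) as [->|Ht0].
      * rewrite zigzag_zero in E. lra.
      * assert (Hb := zigzag_bounds t ltac:(lra) ltac:(lra)). lra.
Qed.

Definition left_piece (x : R) : R :=
  if Rlt_dec x (1/6) then 3 * x else if Rlt_dec x (1/3) then 3/4 - 3 * x / 2
  else 3 * x / 2 - 1/4.

Definition left_count (y : R) : nat :=
  ((if Rle_dec 0 y then if Rlt_dec y (1/2) then 1 else 0 else 0) +
   (if Rlt_dec (1/4) y then if Rle_dec y (1/2) then 1 else 0 else 0) +
   (if Rle_dec (1/4) y then if Rlt_dec y (1/2) then 1 else 0 else 0))%nat.

Lemma left_piece_level : forall y, exists L,
  length L = left_count y /\ level_list left_piece (fun x => 0 <= x < 1/2) y L.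
Proof.
  intros y.
  assert (H1 : exists L, length L = (if Rle_dec 0 y then if Rlt_dec y (1/2) then 1 else 0
                                     else 0)%nat /\
                         level_list left_piece (fun x => 0 <= x < 1/6) y L)
    by affine_piece_level left_piece (y / 3).
  assert (H2 : exists L, length L = (if Rlt_dec (1/4) y then if Rle_dec y (1/2) then 1 else 0
                                     else 0)%nat /\
                         level_list left_piece (fun x => 1/6 <= x < 1/3) y L)
    by affine_piece_level left_piece (1/2 - 2 * y / 3).
  assert (H3 : exists L, length L = (if Rle_dec (1/4) y then if Rlt_dec y (1/2) then 1 else 0
                                     else 0)%nat /\
                         level_list left_piece (fun x => 1/3 <= x < 1/2) y L)
    by affine_piece_level left_piece (2 * y / 3 + 1/6).
  destruct H1 as [L1 [E1 H1]], H2 as [L2 [E2 H2]], H3 as [L3 [E3 H3]].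
  exists (L1 ++ L2 ++ L3). split; [rewrite !length_app, E1, E2, E3; unfold left_count; lia|].
  apply (level_list_ext left_piece left_piece
           (fun x => 0 <= x < 1/6 \/ (1/6 <= x < 1/3 \/ 1/3 <= x < 1/2))); auto.
  - intros t; lra.
  - apply level_list_app; [auto|apply level_list_app; auto|]; intros t; lra.
Qed.

Lemma left_piece_lipschitz : lipschitz_on left_piece 3 0 (1/2).
Proof. intros x y Hx Hxy Hy. unfold left_piece; repeat destruct Rlt_dec; solve_abs. Qed.

Definition witness (t : R) : R := if Rlt_dec t (1/2) then left_piece t else zigzag (1 - t).

Definition witness_count (y : R) : nat := (left_count y + zigzag_count y)%nat.

Lemma witness_level : forall y, exists L,
  length L = witness_count y /\ level_list witness (fun t => 0 <= t <= 1) y L.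
Proof.
  intros y. destruct (left_piece_level y) as [L1 [E1 H1]], (zigzag_level y) as [L2 [E2 H2]].
  exists (L1 ++ map (fun u => 1 - u) L2).
  split; [rewrite length_app, length_map, E1, E2; reflexivity|].
  apply (level_list_ext witness witness (fun t => 0 <= t < 1/2 \/ 1/2 <= t <= 1)); auto.
  - intros t; lra.
  - apply level_list_app; [| |intros t; lra].
    + apply (level_list_ext left_piece witness (fun x => 0 <= x < 1/2)); [tauto| |exact H1].
      intros t Ht. unfold witness. destruct Rlt_dec; [auto|lra].
    + apply (level_list_map zigzag witness (fun u => 0 <= u <= 1/2) _ y y _ (fun t => 1 - t));
        [intros; ring|intros; ring| |auto].
      intros t. unfold witness. destruct Rlt_dec; split; intros [Ht E]; split; auto; lra.
Qed.

(* Both parts are 3-Lipschitz and take the value 1/2 at t = 1/2. *)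
Lemma witness_lipschitz : lipschitz_on witness 3 0 1.
Proof.
  apply (lipschitz_glue _ _ _ (1/2)).
  - apply (lipschitz_ext witness left_piece); [|exact left_piece_lipschitz].
    intros t Ht. unfold witness. destruct Rlt_dec; auto.
    replace t with (1/2) by lra. replace (1 - 1/2) with (1/2) by lra. rewrite zigzag_half.
    unfold left_piece; repeat destruct Rlt_dec; lra.
  - intros x y Hx Hxy Hy. unfold witness. repeat destruct Rlt_dec; try lra.
    rewrite Rabs_minus_sym. replace (3 * (y - x)) with (3 * ((1 - x) - (1 - y))) by ring.
    apply zigzag_lipschitz; lra.
Qed.

(* Every level set has 0, 2 or 4 points, and each size occurs (at the values 1, 0 and 1/3). *)
Lemma witness_024 : Omega_is_024 witness.
Proof.
  intros k. rewrite (Omega_of_counts witness witness_count witness_level k). split.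
  - intros [y ->]. unfold witness_count, left_count, zigzag_count.
    repeat (destruct Rle_dec || destruct Rlt_dec || destruct Req_EM_T); simpl;
    first [left; reflexivity | right; left; reflexivity | right; right; reflexivity | lra].
  - intros [E | [E | E]]; rewrite E; [exists 1|exists 0|exists (1/3)];
    unfold witness_count, left_count, zigzag_count;
    repeat (destruct Rle_dec || destruct Rlt_dec || destruct Req_EM_T); reflexivity || lra.
Qed.

Theorem mainTheorem7 :
  (~ exists p : list R, Omega_is_024 (poly_eval p)) /\
  (exists f : R -> R, continuous_on_01 f /\ Omega_is_024 f).
Proof.
  split.
  - exact polynomial_not_024.
  - exists witness. split.
    + apply (lipschitz_continuous_on_01 witness 3); [lra|exact witness_lipschitz].
    + exact witness_024.
Qed.
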